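(* Let $R$ be a semiring and $(X,\pi^X)$ an $R$-convex set. An equivalence relation $\sim$ on $X$ is a convex equivalence relation if and only if, for all $p,q\in D_R(X)$ with $p\sim_D q$, we have $\pi^X(p)\sim\pi^X(q)$.
   Context: A semiring is a set $R$ with commutative unital monoid structures $+$ (unit $0$) and $\cdot$ (unit $1$) with $\cdot$ distributing over $+$ and $0\cdot r=0$. $D_R(X)$ is the set of finitely supported $p:X\to R$ with $\sum_xp(x)=1$; $D_R$ is a monad on $\mathsf{Set}$ (pushforward on maps, multiplication $\mu(P)(x)=\sum_qP(q)q(x)$, unit Dirac delta). An $R$-convex set is a $D_R$-algebra $(X,\pi^X:D_R(X)\to X)$; write $\sum_i\alpha_ix_i$ for $\pi^X$ of the formal combination. $\Delta^n_R=D_R(\{0,\dots,n\})$. A convex relation on $X$ is a relation $\sim$ such that for any $\alpha\in\Delta^n_R$, if $x_i\sim y_i$ for all $i$ then $\sum_i\alpha_ix_i\sim\sum_i\alpha_iy_i$; a convex equivalence relation is a convex relation that is an equivalence relation. For an equivalence relation $\sim$ on $X$, $\sim_D$ is the relation on $D_R(X)$ with $p\sim_Dq$ iff $\sum_{y\in[x]}p(y)=\sum_{y\in[x]}q(y)$ for every equivalence class $[x]$. *)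

From HB Require Import structures.
From mathcomp Require Import all_boot all_order all_algebra.
From mathcomp Require Import finmap.
From mathcomp Require Import boolp.

Set Implicit Arguments.
Unset Strict Implicit.
Unset Printing Implicit Defensive.

Import GRing.Theory.
Local Open Scope ring_scope.
Local Open Scope fset_scope.

(* A semiring in the sense of the paper (commutative, unital, 0 absorbing,
   possibly trivial) is a [comPzSemiRingType]. *)
Definition fsf (R : comPzSemiRingType) (X : choiceType) :=
  {fsfun X -> R with 0}.

(* p belongs to D_R(X): its values sum to 1. *)
Definition is_dist (R : comPzSemiRingType) (X : choiceType) (p : fsf R X) :=
  \sum_(x <- finsupp p) p x = 1.

Definition dirac (R : comPzSemiRingType) (X : choiceType) (x : X) : fsf R X :=
  [fsfun y in [fset x] => (1 : R) | 0].

Definition pushf (R : comPzSemiRingType) (X Y : choiceType) (f : X -> Y)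
  (p : fsf R X) : fsf R Y :=
  [fsfun y in f @` finsupp p => \sum_(x <- finsupp p | f x == y) p x | 0].

Definition mult (R : comPzSemiRingType) (X : choiceType)
  (P : fsf R (fsf R X)) : fsf R X :=
  [fsfun x in \bigcup_(q <- finsupp P) finsupp q =>
     \sum_(q <- finsupp P) P q * q x | 0].

(* (X, pi) is a D_R-algebra (an R-convex set).  pi is given as a map on all
   finitely supported functions; only its restriction to D_R(X) matters,
   and the algebra laws are imposed on D_R(X) and D_R(D_R(X)) only. *)
Definition is_convex_set (R : comPzSemiRingType) (X : choiceType)
  (pi : fsf R X -> X) : Prop :=
  (forall x : X, pi (dirac R x) = x) /\
  (forall P : fsf R (fsf R X), is_dist P ->
     (forall q, q \in finsupp P -> is_dist q) ->
     pi (mult P) = pi (pushf pi P)).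

Definition simplex (R : comPzSemiRingType) (n : nat) (a : fsf R 'I_n.+1) :=
  is_dist a.

(* The convex combination sum_i a_i x_i := pi (D_R(i |-> x_i)(a)). *)
Definition convex_comb (R : comPzSemiRingType) (X : choiceType)
  (pi : fsf R X -> X) (n : nat) (a : fsf R 'I_n.+1) (x : 'I_n.+1 -> X) : X :=
  pi (pushf x a).

Definition convex_relation (R : comPzSemiRingType) (X : choiceType)
  (pi : fsf R X -> X) (r : X -> X -> Prop) : Prop :=
  forall (n : nat) (a : fsf R 'I_n.+1) (x y : 'I_n.+1 -> X),
    simplex a -> (forall i, r (x i) (y i)) ->
    r (convex_comb pi a x) (convex_comb pi a y).

Definition is_equiv_rel (X : Type) (r : X -> X -> Prop) : Prop :=
  (forall x, r x x) /\ (forall x y, r x y -> r y x) /\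
  (forall x y z, r x y -> r y z -> r x z).

Definition convex_equivalence (R : comPzSemiRingType) (X : choiceType)
  (pi : fsf R X -> X) (r : X -> X -> Prop) : Prop :=
  convex_relation pi r /\ is_equiv_rel r.

Definition rel_D (R : comPzSemiRingType) (X : choiceType)
  (r : X -> X -> Prop) (p q : fsf R X) : Prop :=
  forall x : X,
    \sum_(y <- finsupp p | `[< r y x >]) p y =
    \sum_(y <- finsupp q | `[< r y x >]) q y.

(* (=>) Choose a map [rep] sending every element to a fixed member of its
   class.  Convexity, applied to the coefficients of p indexed by its support,
   gives pi(p) ~ pi(D(rep)(p)), and p ~_D q says exactly that
   D(rep)(p) = D(rep)(q).  (<=) If x_i ~ y_i for all i, then D(x)(a) and
   D(y)(a) put the same mass on every class. *)

From HB Require Import structures.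
From mathcomp Require Import all_boot all_order all_algebra.
From mathcomp Require Import finmap.
From mathcomp Require Import boolp.

Set Implicit Arguments.
Unset Strict Implicit.
Unset Printing Implicit Defensive.

Import GRing.Theory.
Local Open Scope ring_scope.
Local Open Scope fset_scope.

Section Pushforward.
Variable R : comPzSemiRingType.

Lemma big_pred1_uniq (T : eqType) (s : seq T) (w : T) (F : T -> R) : uniq s ->
  \sum_(z <- s | z == w) F z = if w \in s then F w else 0.
Proof.
move=> s_uniq; case: ifP => ws.
  by rewrite -big_filter (filter_pred1_uniq s_uniq ws) big_seq1.
by apply: big1_seq => z /andP[/eqP -> ]; rewrite ws.
Qed.

Lemma pushfE (I Y : choiceType) (f : I -> Y) (a : fsf R I) (w : Y) :
  pushf f a w = \sum_(i <- finsupp a | f i == w) a i.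
Proof.
rewrite /pushf fsfun_fun; case: ifP => // /negP w_notin; symmetry.
by apply: big1_seq => i /andP[/eqP fi ia]; case: w_notin; rewrite -fi in_imfset.
Qed.

Lemma pushf_id (X : choiceType) (p : fsf R X) : pushf id p = p.
Proof.
apply/fsfunP => w; rewrite pushfE big_pred1_uniq ?fset_uniq //.
by case: ifP => // /negbT w_notin; rewrite fsfun_dflt.
Qed.

Lemma sum_pushf (I Y : choiceType) (f : I -> Y) (a : fsf R I) (P : pred Y) :
  \sum_(w <- finsupp (pushf f a) | P w) pushf f a w =
  \sum_(i <- finsupp a | P (f i)) a i.
Proof.
have supp_sub : finsupp (pushf f a) `<=` f @` finsupp a.
  apply/fsubsetP => w; rewrite mem_finsupp /pushf fsfun_fun.
  by case: ifP => //; rewrite eqxx.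
rewrite big_mkcond (big_fset_incl _ supp_sub); last first.
  by move=> w _ w_notin; rewrite fsfun_dflt // if_same.
rewrite [RHS]big_mkcond (partition_big_imfset _ f).
apply: congr_big => // w _.
rewrite pushfE; under [RHS]eq_bigr => i /eqP fi do rewrite fi.
by case: (P w); rewrite // big1.
Qed.

Lemma is_dist_pushf (I Y : choiceType) (f : I -> Y) (a : fsf R I) :
  is_dist a -> is_dist (pushf f a).
Proof. by rewrite /is_dist (sum_pushf f a xpredT). Qed.

Lemma sum_finsupp_fintype (I : finType) (a : fsf R I) (P : pred I) :
  \sum_(i <- finsupp a | P i) a i = \sum_(i | P i) a i.
Proof.
rewrite big_mkcond [RHS]big_mkcond big_uniq ?fset_uniq //=.
rewrite [RHS](bigID (mem (finsupp a))) /= [X in (_ + X)%R]big1 ?addr0 //.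
by move=> i /negP i_notin; rewrite fsfun_dflt ?if_same //; apply/negP.
Qed.

(* The coefficients of [p] indexed by the positions of its support; the last
   index gets weight 0, since Delta^n has n + 1 vertices. *)
Definition ord_coefs (X : choiceType) (p : fsf R X) (x0 : X) :
    fsf R 'I_(size (finsupp p)).+1 :=
  [fsfun i in [fset j | j in 'I_(size (finsupp p)).+1] =>
     if (i < size (finsupp p))%N then p (nth x0 (finsupp p) i) else 0 | 0].

Lemma ord_coefsE (X : choiceType) (p : fsf R X) (x0 : X) i :
  ord_coefs p x0 i =
  if (i < size (finsupp p))%N then p (nth x0 (finsupp p) i) else 0.
Proof. by rewrite /ord_coefs fsfun_fun in_imfset. Qed.

Lemma pushf_ord_coefs (X Y : choiceType) (p : fsf R X) (x0 : X) (f : X -> Y) :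
  pushf (fun i : 'I_(size (finsupp p)).+1 => f (nth x0 (finsupp p) i))
    (ord_coefs p x0) = pushf f p.
Proof.
apply/fsfunP => w; rewrite !pushfE sum_finsupp_fintype big_mkcond big_ord_recr.
rewrite /= ord_coefsE ltnn if_same addr0 [RHS]big_mkcond (big_nth x0) big_mkord.
by apply: eq_bigr => i _; rewrite ord_coefsE /= ltn_ord.
Qed.

Lemma is_dist_ord_coefs (X : choiceType) (p : fsf R X) (x0 : X) :
  is_dist p -> is_dist (ord_coefs p x0).
Proof.
move=> p_dist; have := sum_pushf (fun i : 'I_(size (finsupp p)).+1 =>
  nth x0 (finsupp p) i) (ord_coefs p x0) xpredT.
by rewrite (pushf_ord_coefs p x0 id) pushf_id /is_dist => <-.
Qed.

End Pushforward.

Section ConvexRelation.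
Variables (R : comPzSemiRingType) (X : choiceType) (pi : fsf R X -> X).
Variable r : X -> X -> Prop.

Lemma convex_relation_pushf (p : fsf R X) (f g : X -> X) :
  convex_relation pi r -> is_dist p -> (forall x, r (f x) (g x)) ->
  r (pi (pushf f p)) (pi (pushf g p)).
Proof.
move=> r_convex p_dist fg.
pose at_pos i : X := nth (pi p) (finsupp p) i.
have := r_convex _ _ (f \o at_pos) (g \o at_pos)
  (is_dist_ord_coefs (pi p) p_dist) (fun i => fg _).
by rewrite /convex_comb !pushf_ord_coefs.
Qed.

Hypothesis r_equiv : is_equiv_rel r.

Lemma equiv_rel_rep : exists rep : X -> X,
  (forall x, r (rep x) x) /\ (forall x y, r x y -> rep x = rep y).
Proof.
have [r_refl [r_sym r_trans]] := r_equiv.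
have inhabited_class x : exists z, `[< r z x >].
  by exists x; apply/asboolP; exact: r_refl.
exists (fun x => xchoose (inhabited_class x)); split.
  by move=> x; apply/asboolP; exact: (xchooseP (inhabited_class x)).
move=> x y rxy; apply: eq_xchoose => z; apply: asbool_equiv_eq.
by split=> rz; [exact: r_trans rxy | exact: r_trans rz (r_sym _ _ rxy)].
Qed.

Lemma rel_D_pushf_rep (rep : X -> X) (p q : fsf R X) :
  (forall x, r (rep x) x) -> (forall x y, r x y -> rep x = rep y) ->
  rel_D r p q -> pushf rep p = pushf rep q.
Proof.
have [_ [r_sym _]] := r_equiv.
move=> rep_r rep_eq pq; apply/fsfunP => w; rewrite !pushfE.
have [rep_w | not_rep] := eqVneq (rep w) w.
  have rep_class z : (rep z == w) = `[< r z w >].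
    apply/eqP/asboolP => [<- | rzw]; first exact: r_sym.
    by rewrite (rep_eq _ _ rzw).
  by rewrite !(eq_bigl _ _ rep_class).
have no_preimage z : (rep z == w) = false.
  by apply/eqP => rep_z; case/eqP: not_rep; rewrite -rep_z (rep_eq _ _ (rep_r z)).
by rewrite !big1 // => z; rewrite no_preimage.
Qed.

Lemma rel_D_pushf (I : choiceType) (a : fsf R I) (x y : I -> X) :
  (forall i, r (x i) (y i)) -> rel_D r (pushf x a) (pushf y a).
Proof.
have [_ [r_sym r_trans]] := r_equiv.
move=> xy z; rewrite !(sum_pushf _ a (fun w => `[< r w z >])).
apply: eq_bigl => i; apply: asbool_equiv_eq.
by split=> rz; [exact: r_trans (r_sym _ _ (xy i)) rz | exact: r_trans (xy i) rz].
Qed.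

End ConvexRelation.

Theorem mainTheorem8 (R : comPzSemiRingType) (X : choiceType)
  (pi : fsf R X -> X) (Hpi : is_convex_set pi)
  (r : X -> X -> Prop) (Heq : is_equiv_rel r) :
  convex_equivalence pi r <->
  (forall p q : fsf R X, is_dist p -> is_dist q -> rel_D r p q ->
     r (pi p) (pi q)).
Proof.
have [_ [r_sym r_trans]] := Heq.
split=> [[r_convex _] p q p_dist q_dist pq | rel_D_pi].
  have [rep [rep_r rep_eq]] := equiv_rel_rep Heq.
  have pi_rep s : is_dist s -> r (pi s) (pi (pushf rep s)).
    move=> s_dist; rewrite -{1}(pushf_id s).
    by apply: (convex_relation_pushf r_convex s_dist) => x; exact: r_sym.
  apply: r_trans (pi_rep p p_dist) _.
  by rewrite (rel_D_pushf_rep Heq rep_r rep_eq pq); exact/r_sym/pi_rep.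
split=> // n a x y a_dist xy.
by apply: rel_D_pi; [exact: is_dist_pushf.. | exact: rel_D_pushf].
Qed.
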